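(* In the MDC-ADMM algorithm, the objective $S(\boldsymbol{\mu},\boldsymbol{\theta})$ converges in a finite number of steps; that is, there is an $m^*<\infty$ with $$S\left(\boldsymbol{\mu}^{(m)},\boldsymbol{\theta}^{(m)}\right)=S\left(\boldsymbol{\mu}^{(m^* )},\boldsymbol{\theta}^{(m^* )}\right)\quad\text{for all } m \ge m^*.$$ Moreover, $\left(\boldsymbol{\mu}^{(m^* )},\boldsymbol{\theta}^{(m^* )}\right)$ is a KKT point of the constrained problem of minimizing $S(\boldsymbol{\mu},\boldsymbol{\theta})$ subject to $\boldsymbol{\theta}_{ij}=\boldsymbol{\mu}_i-\boldsymbol{\mu}_j$, $1\le i<j\le n$.
   Context: Given observations $\mathbf{x}_1,\dots,\mathbf{x}_n\in\mathbb{R}^p$, with centroids $\boldsymbol{\mu}_i\in\mathbb{R}^p$, consider the problem $$\min_{\boldsymbol{\mu},\boldsymbol{\theta}} S(\boldsymbol{\mu},\boldsymbol{\theta})=\frac12\sum_{i=1}^n\|\mathbf{x}_i-\boldsymbol{\mu}_i\|_2^2+\lambda_1\sum_{i=1}^n\|\boldsymbol{\mu}_i\|_1+\lambda_2\sum_{i<j}\mathrm{TLP}(\|\boldsymbol{\theta}_{ij}\|_2;\tau)\quad\text{s.t. }\boldsymbol{\theta}_{ij}=\boldsymbol{\mu}_i-\boldsymbol{\mu}_j,\ 1\le i<j\le n,$$ where $\mathrm{TLP}(a,b)=\min(|a|,b)$ and $\lambda_1,\lambda_2,\tau>0$. Write $S=S_1-S_2$ with $S_1(\boldsymbol{\mu},\boldsymbol{\theta})=\frac12\sum_i\|\mathbf{x}_i-\boldsymbol{\mu}_i\|_2^2+\lambda_1\sum_i\|\boldsymbol{\mu}_i\|_1+\lambda_2\sum_{i<j}\|\boldsymbol{\theta}_{ij}\|_2$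 and $S_2(\boldsymbol{\theta})=\lambda_2\sum_{i<j}(\|\boldsymbol{\theta}_{ij}\|_2-\tau)_+$, both convex. MDC-ADMM (a difference-of-convex algorithm combined with ADMM) is: initialize $\hat{\boldsymbol{\mu}}_i^{(0)}=\mathbf{x}_i$, $\hat{\boldsymbol{\theta}}_{ij}^{(0)}=\mathbf{x}_i-\mathbf{x}_j$, dual variables $\hat{\mathbf{v}}_{ij}^{(0)}=\mathbf{0}$; at outer step $m$ replace $S$ by the convex upper approximation $$S^{(m+1)}(\boldsymbol{\mu},\boldsymbol{\theta})=\frac12\sum_i\|\mathbf{x}_i-\boldsymbol{\mu}_i\|_2^2+\lambda_1\sum_i\|\boldsymbol{\mu}_i\|_1+\lambda_2\sum_{i<j}\|\boldsymbol{\theta}_{ij}\|_2 I(\|\hat{\boldsymbol{\theta}}^{(m)}_{ij}\|_2<\tau)+\lambda_2\tau\sum_{i<j}I(\|\hat{\boldsymbol{\theta}}^{(m)}_{ij}\|_2\ge\tau),$$ minimize it subject to $\boldsymbol{\theta}_{ij}=\boldsymbol{\mu}_i-\boldsymbol{\mu}_j$ by ADMM (scaled augmented Lagrangian with penalty parameter $\rho>0$; $\boldsymbol{\mu}_i$-updates are LASSO problems solved by cyclic coordinate descent, $\boldsymbol{\theta}_{ij}$-updates by group soft-thresholding, and $\mathbf{v}_{ij}\leftarrow\mathbf{v}_{ij}+\boldsymbol{\theta}_{ij}-(\boldsymbol{\mu}_i-\boldsymbol{\mu}_j)$), run ADMM to convergence to get $(\hat{\boldsymbol{\mu}}^{(m+1)},\hat{\boldsymbol{\theta}}^{(m+1)})$,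 and repeat while $S$ strictly decreases. *)

From HB Require Import structures.
From mathcomp Require Import all_boot all_order all_algebra.
From mathcomp Require Import reals.
Set Implicit Arguments. Unset Strict Implicit. Unset Printing Implicit Defensive.
Import Order.TTheory GRing.Theory Num.Theory.
Local Open Scope ring_scope.

Section Defs.
Variables (R : realType) (n p : nat).

Definition dotv (a b : 'rV[R]_p) : R := \sum_(k < p) a 0 k * b 0 k.
Definition l2norm (a : 'rV[R]_p) : R := Num.sqrt (\sum_(k < p) a 0 k ^+ 2).
Definition l1norm (a : 'rV[R]_p) : R := \sum_(k < p) `|a 0 k|.

Definition TLP (a b : R) : R := Num.min `|a| b.

(* centroids mu : 'I_n -> R^p ; theta i j used only for i < j *)
Definition objS (x : 'I_n -> 'rV[R]_p) (lam1 lam2 tau : R)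
  (mu : 'I_n -> 'rV[R]_p) (th : 'I_n -> 'I_n -> 'rV[R]_p) : R :=
  2^-1 * (\sum_(i < n) l2norm (x i - mu i) ^+ 2)
  + lam1 * (\sum_(i < n) l1norm (mu i))
  + lam2 * (\sum_(i < n) \sum_(j < n | (i < j)%N) TLP (l2norm (th i j)) tau).

(* convex surrogate S^(m+1), built from the previous iterate thm = theta^(m) *)
Definition surrS (x : 'I_n -> 'rV[R]_p) (lam1 lam2 tau : R)
  (thm : 'I_n -> 'I_n -> 'rV[R]_p)
  (mu : 'I_n -> 'rV[R]_p) (th : 'I_n -> 'I_n -> 'rV[R]_p) : R :=
  2^-1 * (\sum_(i < n) l2norm (x i - mu i) ^+ 2)
  + lam1 * (\sum_(i < n) l1norm (mu i))
  + lam2 * (\sum_(i < n) \sum_(j < n | (i < j)%N)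
              (if l2norm (thm i j) < tau then l2norm (th i j) else 0))
  + lam2 * tau * (\sum_(i < n) \sum_(j < n | (i < j)%N)
              (if l2norm (thm i j) < tau then 0 else 1)).

Definition feasible (mu : 'I_n -> 'rV[R]_p) (th : 'I_n -> 'I_n -> 'rV[R]_p) : Prop :=
  forall i j : 'I_n, (i < j)%N -> th i j = mu i - mu j.

Definition is_subgrad (f : 'rV[R]_p -> R) (a g : 'rV[R]_p) : Prop :=
  forall b, f a + dotv g (b - a) <= f b.

(* (limiting) subdifferential of t |-> TLP(||t||_2; tau) at t:
   that of ||.||_2 if ||t|| < tau, {0} if ||t|| > tau, and the union of
   both at the kink ||t|| = tau *)
Definition tlp_subgrad (tau : R) (t h : 'rV[R]_p) : Prop :=
  (l2norm t < tau /\ is_subgrad l2norm t h)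
  \/ (tau < l2norm t /\ h = 0)
  \/ (l2norm t = tau /\ (h = 0 \/ is_subgrad l2norm t h)).

(* KKT point of  min S(mu, theta)  s.t.  theta_ij = mu_i - mu_j (i < j),
   Lagrangian  S + sum_{i<j} <v_ij, theta_ij - (mu_i - mu_j)>. *)
Definition KKT_point (x : 'I_n -> 'rV[R]_p) (lam1 lam2 tau : R)
  (mu : 'I_n -> 'rV[R]_p) (th : 'I_n -> 'I_n -> 'rV[R]_p) : Prop :=
  feasible mu th /\
  exists v : 'I_n -> 'I_n -> 'rV[R]_p,
    (forall i : 'I_n, exists g, is_subgrad l1norm (mu i) g /\
        (mu i - x i) + lam1 *: g
        - (\sum_(j < n | (i < j)%N) v i j) + (\sum_(j < n | (j < i)%N) v j i) = 0)
    /\ (forall i j : 'I_n, (i < j)%N ->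
        exists h, tlp_subgrad tau (th i j) h /\ lam2 *: h + v i j = 0).

End Defs.

(* The surrogate S^(m+1) depends on theta^(m) only through the finite set of
   pairs with ||theta_ij^(m)|| < tau. It majorizes S and touches it at
   (mu^(m), theta^(m)), so the minimal surrogate values V_m are nonincreasing
   and take finitely many values: they are eventually constant, and from then
   on S(mu^(m), theta^(m)) = V_m and the iterate minimizes its own surrogate.
   At such a minimizer the one-sided directional derivative of the surrogate is
   nonnegative along every feasible direction; the finite-dimensional
   Hahn-Banach theorem applied to its sublinear nonsmooth part yields the
   subgradients of the l1 and group penalties and the Lagrange multipliers
   v_ij, i.e. the KKT system (at the kink ||theta_ij|| = tau the zero
   subgradient is admissible). *)

From mathcomp Require Import all_boot all_order all_algebra.
From mathcomp Require Import boolp reals.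
From mathcomp Require Import ring lra.
Import Order.TTheory GRing.Theory Num.Theory.
Set Implicit Arguments. Unset Strict Implicit. Unset Printing Implicit Defensive.
Local Open Scope ring_scope.

Section Sublinear.
Variables (R : realType) (V : lmodType R).

Definition sublinear (P : V -> R) : Prop :=
  (forall u v, P (u + v) <= P u + P v) /\
  (forall (s : R) v, 0 < s -> P (s *: v) <= s * P v).

Variable P : V -> R.
Hypothesis P_sub : sublinear P.

Lemma sublinear0 : P 0 = 0.
Proof.
have := P_sub.2 2 0 (ltr0Sn _ 1); have := P_sub.2 2^-1 0.
by rewrite !scaler0 invr_gt0 => /(_ (ltr0Sn _ 1)); lra.
Qed.

Lemma sublinear_oppr_le v : - P (- v) <= P v.
Proof. by have := P_sub.1 v (- v); rewrite subrr sublinear0; lra. Qed.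

Lemma sublinearZ (s : R) v : 0 < s -> P (s *: v) = s * P v.
Proof.
move=> s_gt0; apply/eqP; rewrite eq_le P_sub.2 //=.
have := P_sub.2 s^-1 (s *: v); rewrite invr_gt0 => /(_ s_gt0).
by rewrite scalerA mulVf ?gt_eqF // scale1r ler_pdivlMl.
Qed.

Lemma sublinear_line_minorant (e : V) (r : R) : r * P e <= P (r *: e).
Proof.
case: (ltrgtP r 0) => [r_lt0 | r_gt0 | ->]; last by rewrite mul0r scale0r sublinear0.
- have -> : r *: e = (- r) *: (- e) by rewrite scaleNr scalerN opprK.
  rewrite sublinearZ ?oppr_gt0 // -[r * _]mulrNN; apply: ler_wpM2l; first lra.
  by have := sublinear_oppr_le (- e); rewrite opprK; lra.
- by rewrite sublinearZ.
Qed.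

End Sublinear.

(* The one-step extension device of Hahn-Banach: every linear minorant of
   [quotient_functional] is dominated by [P] and extends [l]. *)
Section QuotientFunctional.
Variables (R : realType) (U V : lmodType R) (P : V -> R) (T : U -> V) (l : U -> R).
Hypotheses (P_sub : sublinear P)
  (T_add : {morph T : u v / u + v}) (T_scale : scalable T)
  (l_add : {morph l : u v / u + v}) (l_scale : scalable_for *%R l)
  (l_le : forall d, l d <= P (T d)).

Definition quotient_functional (w : V) : R :=
  inf (fun y => exists d, y = P (w + T d) - l d).

Lemma quotient_functional_le w d : quotient_functional w <= P (w + T d) - l d.
Proof.
apply: ge_inf; last by exists d.
exists (- P (- w)) => _ [d' ->].
have := P_sub.1 (w + T d') (- w); rewrite addrC addKr.
have := l_le d'; lra.
Qed.

Lemma quotient_functional_glb w z :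
  (forall d, z <= P (w + T d) - l d) -> z <= quotient_functional w.
Proof.
by move=> z_le; apply: lb_le_inf; [exists (P (w + T 0) - l 0), 0 | move=> _ [d ->]].
Qed.

Lemma quotient_functional_le_self w : quotient_functional w <= P w.
Proof.
have := quotient_functional_le w 0.
by rewrite -(scale0r (0 : U)) T_scale l_scale scale0r mul0r addr0 subr0.
Qed.

Lemma quotient_functional_T d : quotient_functional (T d) <= l d.
Proof.
have := quotient_functional_le (T d) (- d).
by rewrite -scaleN1r T_scale l_scale scaleN1r subrr sublinear0 //; lra.
Qed.

Lemma quotient_functional_sublinear : sublinear quotient_functional.
Proof.
split=> [w1 w2 | s w s_gt0].
- have split_le d1 d2 : quotient_functional (w1 + w2)
      <= (P (w1 + T d1) - l d1) + (P (w2 + T d2) - l d2).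
    have := quotient_functional_le (w1 + w2) (d1 + d2); rewrite T_add l_add.
    have := P_sub.1 (w1 + T d1) (w2 + T d2); rewrite addrACA; lra.
  have le_w1 d2 : quotient_functional (w1 + w2) - (P (w2 + T d2) - l d2)
      <= quotient_functional w1.
    by apply: quotient_functional_glb => d1; have := split_le d1 d2; lra.
  suff : quotient_functional (w1 + w2) - quotient_functional w1
      <= quotient_functional w2 by lra.
  by apply: quotient_functional_glb => d2; have := le_w1 d2; lra.
- rewrite mulrC -ler_pdivrMr //; apply: quotient_functional_glb => d.
  have := quotient_functional_le (s *: w) (s *: d).
  rewrite T_scale l_scale -scalerDr (sublinearZ P_sub _ s_gt0).
  by rewrite ler_pdivrMr // mulrBl; lra.
Qed.

Lemma linear_minorant_quotient (c : V -> R) :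
  {morph c : u v / u + v} -> scalable_for *%R c ->
  (forall w, c w <= quotient_functional w) -> forall d, c (T d) = l d.
Proof.
move=> c_add c_scale c_le d; apply/eqP; rewrite eq_le.
rewrite (le_trans (c_le _) (quotient_functional_T d)) /=.
have := le_trans (c_le _) (quotient_functional_T (- d)).
by rewrite -scaleN1r T_scale l_scale c_scale; lra.
Qed.

End QuotientFunctional.

Section FiniteDimensionalHahnBanach.
Variables (R : realType) (I : finType).
Notation F := {ffun I -> R^o}.

(* Induction on the support: the coefficient at a point [x] of [S] is read off
   [P] on the indicator of [x], and the others come from the quotient of [P]
   by the line through that indicator. *)
Lemma sublinear_minorant_on (S : {set I}) (P : F -> R) : sublinear P ->
  exists c : I -> R, forall w : F, (forall i, i \notin S -> w i = 0) ->
    \sum_(i in S) c i * w i <= P w.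
Proof.
elim: {S}#|S| {-2}S (erefl #|S|) P => [|N IH] S cardS P P_sub.
  exists (fun _ => 0) => w w_supp.
  have -> : w = 0 by apply/ffunP => i; rewrite ffunE w_supp // (card0_eq cardS).
  by rewrite sublinear0 // big1 // => i _; rewrite mul0r.
have [x xS] : exists x, x \in S by apply/set0Pn; rewrite -card_gt0 cardS.
pose e : F := [ffun i => if i == x then 1 else 0].
pose T (r : R^o) : F := r *: e; pose l (r : R^o) : R := P e * r.
have T_add : {morph T : a b / a + b} by move=> a b; rewrite /T scalerDl.
have T_scale : scalable T by move=> a b; rewrite /T scalerA.
have l_add : {morph l : a b / a + b} by move=> a b; rewrite /l mulrDr.
have l_scale : scalable_for *%R l by move=> a b; rewrite /l mulrCA.
have l_le r : l r <= P (T r) by rewrite /l mulrC sublinear_line_minorant.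
have Q_sub := quotient_functional_sublinear P_sub T_add T_scale l_add l_scale l_le.
have cardSx : #|S :\ x| = N by move: cardS; rewrite (cardsD1 x) xS add1n => -[].
have [c' c'_le] := IH _ cardSx _ Q_sub.
exists (fun i => if i == x then P e else c' i) => w w_supp.
rewrite (big_setD1 x xS) /= eqxx.
pose w' := w - w x *: e.
have w'_supp i : i \notin S :\ x -> w' i = 0.
  rewrite in_setD1 negb_and negbK !ffunE => /orP[/eqP ->|iNS].
    by rewrite eqxx /GRing.scale /= mulr1 subrr.
  case: eqP => [ix | _]; first by rewrite ix xS in iNS.
  by rewrite (w_supp i iNS) /GRing.scale /= mulr0 subr0.
have := quotient_functional_le P_sub l_le w' (w x); rewrite /T /l subrK.
have := c'_le _ w'_supp.
rewrite (eq_bigr (fun i => (if i == x then P e else c' i) * w i)); first by lra.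
move=> i; rewrite in_setD1 => /andP[/negbTE ix _].
by rewrite ix !ffunE ix /GRing.scale /= mulr0 subr0.
Qed.

Lemma sublinear_minorant (P : F -> R) : sublinear P ->
  exists c : I -> R, forall w : F, \sum_i c i * w i <= P w.
Proof.
move=> P_sub; have [c c_le] := sublinear_minorant_on [set: I] P_sub.
exists c => w; have := c_le w; rewrite (eq_bigl xpredT) => [|i]; last by rewrite in_setT.
by apply=> i; rewrite in_setT.
Qed.

Lemma hahn_banach (U : lmodType R) (P : F -> R) (T : U -> F) (l : U -> R) :
  sublinear P -> {morph T : u v / u + v} -> scalable T ->
  {morph l : u v / u + v} -> scalable_for *%R l ->
  (forall d, l d <= P (T d)) ->
  exists c : I -> R, (forall w : F, \sum_i c i * w i <= P w) /\
    (forall d, \sum_i c i * T d i = l d).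
Proof.
move=> P_sub T_add T_scale l_add l_scale l_le.
have Q_sub := quotient_functional_sublinear P_sub T_add T_scale l_add l_scale l_le.
have [c c_le] := sublinear_minorant Q_sub.
exists c; split => [w | d].
  by apply: le_trans (c_le w) _; exact: quotient_functional_le_self.
apply: (linear_minorant_quotient P_sub T_scale l_scale l_le _ _ c_le).
- by move=> u v; rewrite -big_split; apply: eq_bigr => i _; rewrite ffunE mulrDr.
- by move=> s u; rewrite mulr_sumr; apply: eq_bigr => i _; rewrite ffunE mulrCA.
Qed.

End FiniteDimensionalHahnBanach.

Section EuclideanNorm.
Variables (R : realType) (p : nat).
Implicit Types a b c : 'rV[R]_p.

Lemma sumsq_ge0 a : 0 <= \sum_(k < p) a 0 k ^+ 2.
Proof. by apply: sumr_ge0 => k _; apply: sqr_ge0. Qed.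

Lemma l2norm_ge0 a : 0 <= l2norm a.
Proof. exact: sqrtr_ge0. Qed.

Lemma l2norm_sq a : l2norm a ^+ 2 = \sum_(k < p) a 0 k ^+ 2.
Proof. by rewrite /l2norm sqr_sqrtr // sumsq_ge0. Qed.

Lemma dotvv a : dotv a a = l2norm a ^+ 2.
Proof. by rewrite l2norm_sq; apply: eq_bigr => k _; rewrite expr2. Qed.

Lemma dotvC a b : dotv a b = dotv b a.
Proof. by apply: eq_bigr => k _; rewrite mulrC. Qed.

Lemma dotvDr a b c : dotv a (b + c) = dotv a b + dotv a c.
Proof. by rewrite /dotv -big_split; apply: eq_bigr => k _; rewrite mxE mulrDr. Qed.

Lemma dotvZr a b (s : R) : dotv a (s *: b) = s * dotv a b.
Proof. by rewrite /dotv mulr_sumr; apply: eq_bigr => k _; rewrite mxE mulrCA. Qed.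

Lemma dotvZl a b (s : R) : dotv (s *: a) b = s * dotv a b.
Proof. by rewrite dotvC dotvZr dotvC. Qed.

Lemma dotvNr a b : dotv a (- b) = - dotv a b.
Proof. by rewrite -scaleN1r dotvZr mulN1r. Qed.

Lemma dotv0r a : dotv a 0 = 0.
Proof. by rewrite /dotv big1 // => k _; rewrite mxE mulr0. Qed.

Lemma dotv0l b : dotv 0 b = 0.
Proof. by rewrite dotvC dotv0r. Qed.

Lemma dotvDl a b c : dotv (a + b) c = dotv a c + dotv b c.
Proof. by rewrite dotvC dotvDr !(dotvC c). Qed.

Lemma dotvBl a b c : dotv (a - b) c = dotv a c - dotv b c.
Proof. by rewrite dotvC dotvDr dotvNr !(dotvC c). Qed.

Lemma dotv_sumr (I : Type) (r : seq I) (P : pred I) a (F : I -> 'rV[R]_p) :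
  dotv a (\sum_(i <- r | P i) F i) = \sum_(i <- r | P i) dotv a (F i).
Proof. by rewrite (big_morph (dotv a) (dotvDr a) (dotv0r a)). Qed.

Lemma dotv_suml (I : Type) (r : seq I) (P : pred I) (F : I -> 'rV[R]_p) b :
  dotv (\sum_(i <- r | P i) F i) b = \sum_(i <- r | P i) dotv (F i) b.
Proof. by rewrite dotvC dotv_sumr; apply: eq_bigr => i _; rewrite dotvC. Qed.

Lemma l2norm0 : l2norm (0 : 'rV[R]_p) = 0.
Proof. by rewrite /l2norm big1 ?sqrtr0 // => k _; rewrite mxE expr0n. Qed.

Lemma l2norm_eq0 a : (l2norm a == 0) = (a == 0).
Proof.
apply/idP/eqP => [|->]; last by rewrite l2norm0.
rewrite /l2norm sqrtr_eq0 => sum_le0.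
have /psumr_eq0P sum0 : \sum_(k < p) a 0 k ^+ 2 = 0.
  by apply/eqP; rewrite eq_le sum_le0 sumsq_ge0.
by apply/rowP => k; apply/eqP; rewrite mxE -sqrf_eq0 sum0 // => i _; apply: sqr_ge0.
Qed.

Lemma l2norm_gt0 a : a != 0 -> 0 < l2norm a.
Proof. by move=> a_neq0; rewrite lt_def l2norm_eq0 a_neq0 l2norm_ge0. Qed.

Lemma dotv_le0_eq0 a : (forall b, dotv a b <= 0) -> a = 0.
Proof.
move=> a_le0; apply/eqP; rewrite -l2norm_eq0 -sqrf_eq0 -dotvv eq_le a_le0.
by rewrite dotvv sqr_ge0.
Qed.

Lemma l2norm_sqD a b :
  l2norm (a + b) ^+ 2 = l2norm a ^+ 2 + 2 * dotv a b + l2norm b ^+ 2.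
Proof.
rewrite !l2norm_sq /dotv mulr_sumr -!big_split /=; apply: eq_bigr => k _.
by rewrite mxE; ring.
Qed.

Lemma l2normZ (s : R) a : l2norm (s *: a) = `|s| * l2norm a.
Proof.
rewrite /l2norm -sqrtr_sqr -sqrtrM ?sqr_ge0 // mulr_sumr; congr Num.sqrt.
by apply: eq_bigr => k _; rewrite mxE exprMn.
Qed.

(* Expand [0 <= | |b| a - |a| b |^2]. *)
Lemma dotv_le a b : dotv a b <= l2norm a * l2norm b.
Proof.
have [a0 | a_neq0] := eqVneq a 0; first by rewrite a0 dotv0l l2norm0 mul0r.
have [b0 | b_neq0] := eqVneq b 0; first by rewrite b0 dotv0r l2norm0 mulr0.
have na_gt0 := l2norm_gt0 a_neq0; have nb_gt0 := l2norm_gt0 b_neq0.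
have := sqr_ge0 (l2norm (l2norm b *: a + (- l2norm a) *: b)).
rewrite l2norm_sqD !l2normZ dotvZl dotvZr normrN !ger0_norm ?l2norm_ge0 //.
have := mulr_gt0 na_gt0 nb_gt0; nra.
Qed.

Lemma dotv_sum_diff (J : finType) (P : J -> J -> 'rV[R]_p) (u : J -> 'rV[R]_p) :
  \sum_i \sum_j dotv (P i j) (u i - u j)
  = \sum_i dotv (\sum_j P i j - \sum_j P j i) (u i).
Proof.
transitivity (\sum_i \sum_j dotv (P i j) (u i) - \sum_i \sum_j dotv (P i j) (u j)).
  rewrite -sumrB; apply: eq_bigr => i _; rewrite -sumrB.
  by apply: eq_bigr => j _; rewrite dotvDr dotvNr.
rewrite [X in _ - X]exchange_big -sumrB; apply: eq_bigr => i _.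
by rewrite dotvBl !dotv_suml.
Qed.

Lemma rows_orthogonal_eq0 (n : nat) (G : 'I_n -> 'rV[R]_p) :
  (forall d : 'M[R]_(n, p), \sum_i dotv (G i) (row i d) = 0) -> forall i, G i = 0.
Proof.
move=> orth i; have := orth (\matrix_i G i).
under eq_bigr do rewrite rowK dotvv.
move/psumr_eq0P => /(_ (fun j _ => sqr_ge0 _) i isT) /eqP.
by rewrite sqrf_eq0 l2norm_eq0 => /eqP.
Qed.

Lemma l2normD a b : l2norm (a + b) <= l2norm a + l2norm b.
Proof.
have := l2norm_sqD a b; have := dotv_le a b.
have := l2norm_ge0 (a + b); have := l2norm_ge0 a; have := l2norm_ge0 b.
nra.
Qed.

Definition l2norm_dir a b : R :=
  if a == 0 then l2norm b else dotv a b / l2norm a.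

Lemma l2norm_dir_le a b : l2norm_dir a b <= l2norm b.
Proof.
rewrite /l2norm_dir; case: eqP => // /eqP a_neq0.
by rewrite ler_pdivrMr ?l2norm_gt0 // mulrC dotv_le.
Qed.

Lemma l2norm_dirNself a : l2norm_dir a (- a) = - l2norm a.
Proof.
rewrite /l2norm_dir; case: eqP => [->|/eqP a_neq0]; first by rewrite oppr0 l2norm0 oppr0.
by rewrite dotvNr dotvv expr2 mulNr mulfK // gt_eqF // l2norm_gt0.
Qed.

Lemma l2norm_dirD a b c : l2norm_dir a (b + c) <= l2norm_dir a b + l2norm_dir a c.
Proof. by rewrite /l2norm_dir; case: eqP => _; [exact: l2normD | rewrite dotvDr mulrDl]. Qed.

Lemma l2norm_dirZ a b (s : R) : 0 <= s -> l2norm_dir a (s *: b) = s * l2norm_dir a b.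
Proof.
move=> s_ge0; rewrite /l2norm_dir.
by case: eqP => _; rewrite ?l2normZ ?ger0_norm ?dotvZr ?mulrA.
Qed.

Lemma l2norm_dir0 a : l2norm_dir a 0 = 0.
Proof. by rewrite -(scale0r (0 : 'rV[R]_p)) l2norm_dirZ // mul0r. Qed.

(* AM-GM: [y <= (N^2 + y^2) / (2 N)] for [y = |a + t b|] and [N = |a|]. *)
Lemma l2norm_shift_le a b (t : R) : 0 < t ->
  l2norm (a + t *: b) <= l2norm a + t * l2norm_dir a b
    + t ^+ 2 * (if a == 0 then 0 else l2norm b ^+ 2 / (2 * l2norm a)).
Proof.
move=> t_gt0; rewrite /l2norm_dir; case: eqP => [->|/eqP a_neq0].
  by rewrite add0r l2norm0 add0r mulr0 addr0 l2normZ gtr0_norm.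
have N_gt0 := l2norm_gt0 a_neq0.
set N := l2norm a; set y := l2norm (a + t *: b).
have y_sq : y ^+ 2 = N ^+ 2 + 2 * t * dotv a b + t ^+ 2 * l2norm b ^+ 2.
  by rewrite /y l2norm_sqD dotvZr l2normZ exprMn gtr0_norm // mulrA.
have -> : N + t * (dotv a b / N) + t ^+ 2 * (l2norm b ^+ 2 / (2 * N))
    = (N ^+ 2 + y ^+ 2) / (2 * N).
  by rewrite y_sq; field; rewrite gt_eqF.
rewrite ler_pdivlMr ?mulr_gt0 //; have := sqr_ge0 (y - N); nra.
Qed.

Lemma l2norm_subgrad a h :
  (forall b, dotv h b <= l2norm_dir a b) -> is_subgrad (@l2norm R p) a h.
Proof.
move=> h_le b; rewrite dotvDr.
have := h_le b; have := h_le (- a); rewrite l2norm_dirNself.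
have := l2norm_dir_le a b; lra.
Qed.

End EuclideanNorm.

Section AbsoluteValue.
Variable R : realType.
Implicit Types a b : R.

Definition abs_dir a b : R := if a == 0 then `|b| else Num.sg a * b.

Lemma abs_dir_le a b : abs_dir a b <= `|b|.
Proof.
rewrite /abs_dir; case: eqP => // _; rewrite (le_trans (ler_norm _)) // normrM.
by case: sgrP => _; rewrite ?normr0 ?normr1 ?normrN1 ?mul0r ?mul1r.
Qed.

Lemma abs_dirNself a : abs_dir a (- a) = - `|a|.
Proof.
by rewrite /abs_dir; case: eqP => [->|_]; rewrite ?oppr0 ?normr0 ?oppr0 // mulrN -normrEsg.
Qed.

Lemma abs_dirD a b c : abs_dir a (b + c) <= abs_dir a b + abs_dir a c.
Proof. by rewrite /abs_dir; case: eqP => _; [exact: ler_normD | rewrite mulrDr]. Qed.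

Lemma abs_dirZ a b (s : R) : 0 <= s -> abs_dir a (s * b) = s * abs_dir a b.
Proof.
move=> s_ge0; rewrite /abs_dir.
by case: eqP => _; [rewrite normrM ger0_norm | rewrite mulrCA].
Qed.

Lemma abs_dir0 a : abs_dir a 0 = 0.
Proof. by rewrite /abs_dir; case: eqP; rewrite ?normr0 ?mulr0. Qed.

Lemma abs_shift_le a b (t : R) : 0 < t ->
  `|a + t * b| <= `|a| + t * abs_dir a b
    + t ^+ 2 * (if a == 0 then 0 else 2 * b ^+ 2 / `|a|).
Proof.
move=> t_gt0; rewrite /abs_dir; case: eqP => [->|/eqP a_neq0].
  by rewrite normr0 mulr0 addr0 !add0r normrM gtr0_norm.
have a_gt0 : 0 < `|a| by rewrite normr_gt0.
set c := t * b.
have -> : t ^+ 2 * (2 * b ^+ 2 / `|a|) = 2 * (c ^+ 2 / `|a|).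
  by rewrite /c; field; rewrite normr_eq0.
rewrite mulrCA -/c; set q := c ^+ 2 / `|a|.
have q_def : q * `|a| = c ^+ 2 by rewrite /q divfK // gt_eqF.
have q_ge0 : 0 <= q by rewrite /q divr_ge0 ?sqr_ge0 // ltW.
case: (ltrgtP a 0) => a_sign; last by move: a_neq0; rewrite a_sign eqxx.
- rewrite ltr0_sg // ltr0_norm // in a_gt0 q_def *.
  by case: (lerP 0 (a + c)) => ac_sign; [rewrite ger0_norm | rewrite ltr0_norm]; nra.
- rewrite gtr0_sg // gtr0_norm // in a_gt0 q_def *.
  by case: (lerP 0 (a + c)) => ac_sign; [rewrite ger0_norm | rewrite ltr0_norm]; nra.
Qed.

Lemma l1norm_subgrad (p : nat) (a g : 'rV[R]_p) :
  (forall k y, g 0 k * y <= abs_dir (a 0 k) y) -> is_subgrad (@l1norm R p) a g.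
Proof.
move=> g_le b; rewrite /l1norm /dotv -big_split; apply: ler_sum => k _ /=.
have := g_le k (b 0 k); have := g_le k (- a 0 k); rewrite abs_dirNself.
by have := abs_dir_le (a 0 k) (b 0 k); rewrite !mxE; lra.
Qed.

End AbsoluteValue.

Section Stationary.
Variables (R : realDomainType) (T : finType) (a : nat -> T) (V : nat -> R).
Hypotheses (V_nonincr : forall m, V m.+1 <= V m)
  (V_key : forall m k, a m = a k -> V m = V k).

Lemma nonincr_le m k : (m <= k)%N -> V k <= V m.
Proof.
apply: (homo_leq (r := fun x y => y <= x)) => // y x z xy yz.
exact: le_trans yz xy.
Qed.

(* If [V] takes two distinct values after time [m1], the key [a m1] is never
   taken again, so the set of keys still available shrinks. *)
Lemma stationary_of_keys_in (S : {set T}) m1 :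
  (forall m, (m1 <= m)%N -> a m \in S) ->
  exists m0, forall m, (m0 <= m)%N -> V m = V m0.
Proof.
elim: {S}#|S| {-2}S (erefl #|S|) m1 => [|N IH] S cardS m1 aS.
  by have := aS m1 (leqnn _); rewrite (card0_eq cardS).
have [[m2 [le12 V21]] | const] := EM (exists m2, (m1 <= m2)%N /\ V m2 != V m1).
  have lt21 : V m2 < V m1 by rewrite lt_neqAle V21 nonincr_le.
  apply: (IH (S :\ a m1) _ m2) => [|m le2m].
    by move: cardS; rewrite (cardsD1 (a m1)) aS // add1n => -[].
  rewrite in_setD1 aS ?andbT ?(leq_trans le12) //.
  apply/eqP => /V_key Vm; have := nonincr_le le2m.
  by rewrite Vm leNgt lt21.
exists m1 => m le1m; apply/eqP; apply: contraT => neq.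
by case: const; exists m.
Qed.

Lemma nonincr_stationary : exists m0, forall m, (m0 <= m)%N -> V m = V m0.
Proof. by apply: (@stationary_of_keys_in [set: T] 0) => m _; rewrite in_setT. Qed.

End Stationary.

Section MajorizeMinimize.
Variables (R : realDomainType) (X : Type) (K : finType).
Variables (feasible : X -> Prop) (f : X -> R) (g : X -> X -> R) (key : X -> K).
Hypotheses (g_majorizes : forall y z, f z <= g y z) (g_touches : forall z, g z z = f z)
  (g_key : forall y y' z, key y = key y' -> g y z = g y' z).
Variable z : nat -> X.
Hypotheses (z_feasible : forall m, feasible (z m))
  (z_step : forall m z', feasible z' -> g (z m) (z m.+1) <= g (z m) z').

Lemma mm_stationary : exists mstar,
  (forall m, (mstar <= m)%N -> f (z m) = f (z mstar)) /\
  (forall z', feasible z' -> g (z mstar) (z mstar) <= g (z mstar) z').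
Proof.
pose V m := g (z m) (z m.+1).
have fV m : f (z m.+1) <= V m by apply: g_majorizes.
have Vf m : V m <= f (z m) by rewrite -g_touches; apply: z_step.
have V_le m k : key (z m) = key (z k) -> V m <= V k.
  by move=> e; rewrite /V -(g_key _ e); apply: z_step.
have [m0 V_const] : exists m0, forall m, (m0 <= m)%N -> V m = V m0.
  apply: (@nonincr_stationary _ _ (key \o z)) => [m | m k e].
    exact: le_trans (Vf m.+1) (fV m).
  by apply/eqP; rewrite eq_le !V_le.
have f_const m : (m0 < m)%N -> f (z m) = V m0.
  case: m => // m /= le0m; apply/eqP; rewrite eq_le -{1}(V_const m) // fV /=.
  by rewrite -(V_const m.+1) ?Vf ?leqW.
exists m0.+1; split => [m le | z' z'_feas]; first by rewrite !f_const.
by rewrite g_touches f_const // -(V_const m0.+1) //; apply: z_step.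
Qed.

End MajorizeMinimize.

Section Surrogate.
Variables (R : realType) (n p : nat) (x : 'I_n -> 'rV[R]_p) (lam1 lam2 tau : R).
Implicit Types (mu : 'I_n -> 'rV[R]_p) (th thm : 'I_n -> 'I_n -> 'rV[R]_p).

Lemma surrSE thm mu th :
  surrS x lam1 lam2 tau thm mu th =
  2^-1 * (\sum_(i < n) l2norm (x i - mu i) ^+ 2)
  + lam1 * (\sum_(i < n) l1norm (mu i))
  + lam2 * (\sum_(i < n) \sum_(j < n | (i < j)%N)
      if l2norm (thm i j) < tau then l2norm (th i j) else tau).
Proof.
rewrite /surrS -addrA -mulrA -mulrDr; congr (_ + lam2 * _).
rewrite mulr_sumr -big_split; apply: eq_bigr => i _.
rewrite mulr_sumr -big_split; apply: eq_bigr => j _.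
by case: ifP => _ /=; rewrite ?mulr0 ?addr0 ?mulr1 ?add0r.
Qed.

Lemma surrS_diag mu th : surrS x lam1 lam2 tau th mu th = objS x lam1 lam2 tau mu th.
Proof.
rewrite surrSE /objS; congr (_ + lam2 * _).
by apply: eq_bigr => i _; apply: eq_bigr => j _; rewrite /TLP ger0_norm ?l2norm_ge0.
Qed.

Lemma objS_le_surrS thm mu th : 0 <= lam2 ->
  objS x lam1 lam2 tau mu th <= surrS x lam1 lam2 tau thm mu th.
Proof.
move=> lam2_ge0; rewrite surrSE /objS lerD2l ler_wpM2l //.
apply: ler_sum => i _; apply: ler_sum => j _; rewrite /TLP ger0_norm ?l2norm_ge0 //.
by case: ifP; rewrite ge_min lexx ?orbT.
Qed.

Lemma surrS_active thm1 thm2 mu th :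
  (forall i j : 'I_n, (i < j)%N ->
     (l2norm (thm1 i j) < tau) = (l2norm (thm2 i j) < tau)) ->
  surrS x lam1 lam2 tau thm1 mu th = surrS x lam1 lam2 tau thm2 mu th.
Proof.
move=> same_active; rewrite !surrSE; congr (_ + lam2 * _).
by apply: eq_bigr => i _; apply: eq_bigr => j /same_active ->.
Qed.

End Surrogate.

Lemma sum_only1 (V : nmodType) (J : finType) (j0 : J) (F : J -> V) :
  (forall j, j != j0 -> F j = 0) -> \sum_j F j = F j0.
Proof. by move=> F0; rewrite (bigD1 j0) //= big1 ?addr0 // => j /F0. Qed.

Section SurrogateKKT.
Variables (R : realType) (n p : nat) (x : 'I_n -> 'rV[R]_p) (lam1 lam2 tau : R).
Hypotheses (lam1_gt0 : 0 < lam1) (lam2_gt0 : 0 < lam2).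
Variables (mu : 'I_n -> 'rV[R]_p) (th : 'I_n -> 'I_n -> 'rV[R]_p).
Hypotheses (feas : feasible mu th)
  (surr_min : forall mu' th', feasible mu' th' ->
     surrS x lam1 lam2 tau th mu th <= surrS x lam1 lam2 tau th mu' th').

Definition active (i j : 'I_n) : bool := l2norm (th i j) < tau.

(* Split variables: a direction [d] of the centroids is lifted to its entries
   together with the pairwise differences [row i d - row j d]. A linear minorant
   of [nonsmooth_dir] agreeing with [- smooth_dir] on lifts has coefficients
   giving the l1 subgradients and the multipliers [v_ij]. *)
Notation I := ('I_n * 'I_p + 'I_n * 'I_n * 'I_p)%type.
Notation F := {ffun I -> R^o}.

Definition mu_block (w : I -> R) (i : 'I_n) : 'rV[R]_p := \row_k w (inl (i, k)).
Definition pair_block (w : I -> R) (i j : 'I_n) : 'rV[R]_p := \row_k w (inr (i, j, k)).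

Definition lift (d : 'M[R]_(n, p)) : F :=
  [ffun z => match z with
             | inl (i, k) => d i k
             | inr (i, j, k) => d i k - d j k end].

Definition smooth_dir (d : 'M[R]_(n, p)) : R := \sum_i dotv (mu i - x i) (row i d).

Definition nonsmooth_dir (w : F) : R :=
  lam1 * \sum_i \sum_k abs_dir (mu i 0 k) (w (inl (i, k)))
  + lam2 * \sum_(i < n) \sum_(j < n | (i < j)%N)
      (if active i j then l2norm_dir (th i j) (pair_block w i j) else 0).

Definition surr_deriv (d : 'M[R]_(n, p)) : R := smooth_dir d + nonsmooth_dir (lift d).

Definition surr_curv (d : 'M[R]_(n, p)) : R :=
  2^-1 * \sum_i \sum_k d i k ^+ 2
  + lam1 * \sum_i \sum_k
      (if mu i 0 k == 0 then 0 else 2 * d i k ^+ 2 / `|mu i 0 k|)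
  + lam2 * \sum_(i < n) \sum_(j < n | (i < j)%N)
      (if active i j && (th i j != 0)
       then l2norm (row i d - row j d) ^+ 2 / (2 * l2norm (th i j)) else 0).

Definition mu_shift (t : R) (d : 'M[R]_(n, p)) (i : 'I_n) : 'rV[R]_p := mu i + t *: row i d.

Lemma mu_block_lift d i : mu_block (lift d) i = row i d.
Proof. by apply/rowP => k; rewrite !mxE ffunE. Qed.

Lemma pair_block_lift d i j : pair_block (lift d) i j = row i d - row j d.
Proof. by apply/rowP => k; rewrite !mxE ffunE. Qed.

Lemma sqdist_shift t d :
  \sum_i l2norm (x i - mu_shift t d i) ^+ 2 = \sum_i l2norm (x i - mu i) ^+ 2
    + t * (2 * smooth_dir d) + t ^+ 2 * \sum_i \sum_k d i k ^+ 2.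
Proof.
rewrite /smooth_dir !mulr_sumr -!big_split; apply: eq_bigr => i _ /=.
rewrite !l2norm_sq /dotv !mulr_sumr -!big_split; apply: eq_bigr => k _ /=.
by rewrite !mxE; ring.
Qed.

Lemma l1_shift_le t d : 0 < t ->
  \sum_i l1norm (mu_shift t d i) <= \sum_i l1norm (mu i)
    + t * \sum_i \sum_k abs_dir (mu i 0 k) (d i k)
    + t ^+ 2 * \sum_i \sum_k
        (if mu i 0 k == 0 then 0 else 2 * d i k ^+ 2 / `|mu i 0 k|).
Proof.
move=> t_gt0; rewrite !mulr_sumr -!big_split; apply: ler_sum => i _ /=.
rewrite /l1norm !mulr_sumr -!big_split; apply: ler_sum => k _ /=.
by rewrite !mxE; apply: abs_shift_le.
Qed.

Lemma fusion_shift_le t d : 0 < t ->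
  \sum_(i < n) \sum_(j < n | (i < j)%N)
     (if active i j then l2norm (mu_shift t d i - mu_shift t d j) else tau)
  <= \sum_(i < n) \sum_(j < n | (i < j)%N) (if active i j then l2norm (th i j) else tau)
    + t * \sum_(i < n) \sum_(j < n | (i < j)%N)
        (if active i j then l2norm_dir (th i j) (row i d - row j d) else 0)
    + t ^+ 2 * \sum_(i < n) \sum_(j < n | (i < j)%N)
        (if active i j && (th i j != 0)
         then l2norm (row i d - row j d) ^+ 2 / (2 * l2norm (th i j)) else 0).
Proof.
move=> t_gt0; rewrite !mulr_sumr -!big_split; apply: ler_sum => i _ /=.
rewrite !mulr_sumr -!big_split; apply: ler_sum => j lt_ij /=.
case: (active i j); last by rewrite !mulr0 !addr0.
have -> : mu_shift t d i - mu_shift t d j = th i j + t *: (row i d - row j d).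
  by rewrite /mu_shift (feas lt_ij) scalerBr opprD addrACA.
by have := l2norm_shift_le (th i j) (row i d - row j d) t_gt0; case: eqP.
Qed.

Lemma nonsmooth_dir_lift d : nonsmooth_dir (lift d) =
  lam1 * \sum_i \sum_k abs_dir (mu i 0 k) (d i k)
  + lam2 * \sum_(i < n) \sum_(j < n | (i < j)%N)
      (if active i j then l2norm_dir (th i j) (row i d - row j d) else 0).
Proof.
rewrite /nonsmooth_dir; congr (lam1 * _ + lam2 * _).
  by apply: eq_bigr => i _; apply: eq_bigr => k _; rewrite ffunE.
by apply: eq_bigr => i _; apply: eq_bigr => j _; rewrite pair_block_lift.
Qed.

Lemma surrS_shift_le t d : 0 < t ->
  surrS x lam1 lam2 tau th (mu_shift t d) (fun i j => mu_shift t d i - mu_shift t d j)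
  <= surrS x lam1 lam2 tau th mu th + t * surr_deriv d + t ^+ 2 * surr_curv d.
Proof.
move=> t_gt0; rewrite !surrSE sqdist_shift /surr_deriv nonsmooth_dir_lift /surr_curv.
have := ler_wpM2l (ltW lam1_gt0) (l1_shift_le d t_gt0).
have := ler_wpM2l (ltW lam2_gt0) (fusion_shift_le d t_gt0).
rewrite /active; lra.
Qed.

(* First-order optimality: a negative slope would beat the minimum for small [t]. *)
Lemma surr_deriv_ge0 d : 0 <= surr_deriv d.
Proof.
have slope_ge0 t : 0 < t -> 0 <= surr_deriv d + t * surr_curv d.
  move=> t_gt0; have := surrS_shift_le d t_gt0.
  have := surr_min (fun i j _ => erefl : mu_shift t d i - mu_shift t d j = _).
  move=> min_le shift_le; rewrite -(pmulr_rge0 _ t_gt0); nra.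
rewrite leNgt; apply/negP => deriv_lt0.
pose t := - surr_deriv d / (`|surr_curv d| + 1).
have den_gt0 : 0 < `|surr_curv d| + 1 by rewrite ltr_pwDr ?normr_ge0.
have t_gt0 : 0 < t by rewrite divr_gt0 // oppr_gt0.
have := slope_ge0 t t_gt0; have := ler_wpM2l (ltW t_gt0) (ler_norm (surr_curv d)).
have : t * (`|surr_curv d| + 1) = - surr_deriv d by rewrite divfK ?gt_eqF.
lra.
Qed.

Lemma pair_blockD (w1 w2 : F) i j :
  pair_block (w1 + w2) i j = pair_block w1 i j + pair_block w2 i j.
Proof. by apply/rowP => k; rewrite !mxE ffunE. Qed.

Lemma pair_blockZ (s : R) (w : F) i j : pair_block (s *: w) i j = s *: pair_block w i j.
Proof. by apply/rowP => k; rewrite !mxE ffunE. Qed.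

Lemma nonsmooth_dir_sublinear : sublinear nonsmooth_dir.
Proof.
split=> [w1 w2 | s w s_gt0]; rewrite /nonsmooth_dir.
- rewrite addrACA -!mulrDr -!big_split.
  apply: lerD; (apply: ler_wpM2l; first exact: ltW);
    apply: ler_sum => i _; rewrite -big_split; apply: ler_sum => j _ /=.
    by rewrite ffunE abs_dirD.
  by case: (active i j); rewrite ?pair_blockD ?l2norm_dirD ?addr0.
- rewrite mulrDr [s * (lam1 * _)]mulrCA [s * (lam2 * _)]mulrCA.
  apply: lerD; (apply: ler_wpM2l; first exact: ltW); rewrite mulr_sumr;
    apply: ler_sum => i _; rewrite mulr_sumr; apply: ler_sum => j _.
    by rewrite ffunE [_ *: _]/GRing.scale /= abs_dirZ ?lexx // ltW.
  by case: (active i j); rewrite ?mulr0 // pair_blockZ l2norm_dirZ ?lexx // ltW.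
Qed.

Lemma liftD : {morph lift : d1 d2 / d1 + d2}.
Proof.
by move=> d1 d2; apply/ffunP => -[[i k] | [[i j] k]]; rewrite !ffunE !mxE // addrACA opprD.
Qed.

Lemma liftZ : scalable lift.
Proof.
by move=> s d; apply/ffunP => -[[i k] | [[i j] k]]; rewrite !ffunE !mxE // -mulrBr.
Qed.

Lemma smooth_dirD d1 d2 : smooth_dir (d1 + d2) = smooth_dir d1 + smooth_dir d2.
Proof. by rewrite /smooth_dir -big_split; apply: eq_bigr => i _; rewrite linearD dotvDr. Qed.

Lemma smooth_dirZ (s : R) d : smooth_dir (s *: d) = s * smooth_dir d.
Proof. by rewrite /smooth_dir mulr_sumr; apply: eq_bigr => i _; rewrite linearZ dotvZr. Qed.

Lemma multiplier_exists : exists c : I -> R,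
  (forall w : F, \sum_z c z * w z <= nonsmooth_dir w) /\
  (forall d, \sum_z c z * lift d z = - smooth_dir d).
Proof.
apply: hahn_banach nonsmooth_dir_sublinear liftD liftZ _ _ _.
- by move=> d1 d2; rewrite smooth_dirD opprD.
- by move=> s d; rewrite smooth_dirZ mulrN.
- by move=> d; have := surr_deriv_ge0 d; rewrite /surr_deriv; lra.
Qed.

Lemma pairing_blocks (c w : I -> R) :
  \sum_z c z * w z = \sum_i dotv (mu_block c i) (mu_block w i)
    + \sum_i \sum_j dotv (pair_block c i j) (pair_block w i j).
Proof.
rewrite big_sumType /=; congr (_ + _).
  transitivity (\sum_i \sum_k c (inl (i, k)) * w (inl (i, k))).
    by rewrite pair_bigA; apply: eq_bigr => -[].
  by apply: eq_bigr => i _; apply: eq_bigr => k _; rewrite !mxE.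
transitivity (\sum_i \sum_j \sum_k c (inr (i, j, k)) * w (inr (i, j, k))).
  by rewrite !pair_bigA; apply: eq_bigr => -[[]].
by apply: eq_bigr => i _; apply: eq_bigr => j _; apply: eq_bigr => k _; rewrite !mxE.
Qed.

Lemma pairing_lift (c : I -> R) d : \sum_z c z * lift d z
  = \sum_i dotv (mu_block c i + (\sum_j pair_block c i j - \sum_j pair_block c j i)) (row i d).
Proof.
rewrite pairing_blocks; under [RHS]eq_bigr do rewrite dotvDl.
rewrite big_split -dotv_sum_diff /=; congr (_ + _).
  by apply: eq_bigr => i _; rewrite mu_block_lift.
by apply: eq_bigr => i _; apply: eq_bigr => j _; rewrite pair_block_lift.
Qed.

Section Multipliers.
Variable c : I -> R.
Hypotheses (c_le : forall w : F, \sum_z c z * w z <= nonsmooth_dir w)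
  (c_lift : forall d, \sum_z c z * lift d z = - smooth_dir d).

Lemma coef_mu_le i k b : c (inl (i, k)) * b <= lam1 * abs_dir (mu i 0 k) b.
Proof.
pose w : F := [ffun z => if z == inl (i, k) then b else 0].
have := c_le w; rewrite (sum_only1 (j0 := inl (i, k))) => [|z /negbTE zNik]; last first.
  by rewrite ffunE zNik mulr0.
rewrite /nonsmooth_dir ffunE eqxx pair_bigA (sum_only1 (j0 := (i, k))) /= => [|[i' k'] ik'].
  rewrite ffunE eqxx big1 ?mulr0 ?addr0 // => i' _; apply: big1 => j' _.
  have -> : pair_block w i' j' = 0 by apply/rowP => k'; rewrite !mxE ffunE.
  by rewrite l2norm_dir0 if_same.
by rewrite ffunE (_ : (inl (i', k') == _) = false) ?abs_dir0 //; apply/negbTE.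
Qed.

Lemma coef_pair_le (i j : 'I_n) b :
  dotv (pair_block c i j) b
  <= lam2 * (if (i < j)%N && active i j then l2norm_dir (th i j) b else 0).
Proof.
pose w : F := [ffun z => if z is inr (i', j', k) then
                 (if (i', j') == (i, j) then b 0 k else 0) else 0].
have w_pair i' j' : pair_block w i' j' = if (i', j') == (i, j) then b else 0.
  by apply/rowP => k; rewrite !mxE ffunE; case: ifP; rewrite ?mxE.
have := c_le w; rewrite pairing_blocks.
rewrite big1 ?add0r => [|i' _]; last first.
  suff -> : mu_block w i' = 0 by rewrite dotv0r.
  by apply/rowP => k; rewrite !mxE ffunE.
rewrite pair_bigA (sum_only1 (j0 := (i, j))) /= => [|[i' j'] ij'].
  rewrite w_pair eqxx /nonsmooth_dir big1 ?mulr0 ?add0r => [|i' _]; last first.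
    by apply: big1 => k _; rewrite ffunE abs_dir0.
  rewrite (eq_bigr (fun i' : 'I_n => \sum_(j' < n) (if (i' < j')%N then
            if active i' j' then l2norm_dir (th i' j') (pair_block w i' j') else 0
            else 0))) => [|i' _]; last by rewrite big_mkcond.
  rewrite pair_bigA (sum_only1 (j0 := (i, j))) /= => [|[i' j'] ij'].
    by rewrite w_pair eqxx; case: (i < j)%N.
  by rewrite w_pair (negbTE ij') l2norm_dir0 !if_same.
by rewrite w_pair (negbTE ij') dotv0r.
Qed.

Lemma coef_pair_inactive (i j : 'I_n) :
  ~~ ((i < j)%N && active i j) -> pair_block c i j = 0.
Proof.
move=> /negbTE inactive; apply: dotv_le0_eq0 => b.
by have := coef_pair_le i j b; rewrite inactive mulr0.
Qed.

Lemma coef_stationary i :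
  mu i - x i + (mu_block c i + (\sum_j pair_block c i j - \sum_j pair_block c j i)) = 0.
Proof.
apply: (rows_orthogonal_eq0 (G := fun i => mu i - x i + (mu_block c i
  + (\sum_j pair_block c i j - \sum_j pair_block c j i)))) => d.
under eq_bigr do rewrite dotvDl.
by rewrite big_split /= -pairing_lift c_lift addrN.
Qed.

End Multipliers.

Lemma kkt_of_surrS_min : KKT_point x lam1 lam2 tau mu th.
Proof.
have [c [c_le c_lift]] := multiplier_exists.
have pair0 (i j : 'I_n) : ~~ (i < j)%N -> pair_block c i j = 0.
  by move=> /negbTE ij; rewrite coef_pair_inactive // ij.
split; first exact: feas.
exists (fun i j => - pair_block c i j); split => [i | i j lt_ij].
- exists (lam1^-1 *: mu_block c i); split.
    apply: l1norm_subgrad => k y; rewrite !mxE -mulrA ler_pdivrMl //.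
    exact: coef_mu_le.
  have sum_gt : \sum_(j < n | (i < j)%N) pair_block c i j = \sum_j pair_block c i j.
    by rewrite big_mkcond; apply: eq_bigr => j _; case: ifPn => // /pair0.
  have sum_lt : \sum_(j < n | (j < i)%N) pair_block c j i = \sum_j pair_block c j i.
    by rewrite big_mkcond; apply: eq_bigr => j _; case: ifPn => // /pair0.
  rewrite scalerA mulfV ?gt_eqF // scale1r !sumrN opprK sum_gt sum_lt -!addrA.
  by have := coef_stationary c_lift i; rewrite -!addrA.
- have [act | inact] := boolP (active i j).
    exists (lam2^-1 *: pair_block c i j); split; last first.
      by rewrite scalerA mulfV ?gt_eqF // scale1r addrN.
    left; split => //; apply: l2norm_subgrad => b.
    rewrite dotvZl ler_pdivrMl //; have := coef_pair_le c_le i j b.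
    by rewrite lt_ij act.
  exists 0; split.
    right; move: inact; rewrite /active -leNgt le_eqVlt => /orP[/eqP tau_eq | tau_lt].
      by right; split; [rewrite tau_eq | left].
    by left.
  by rewrite scaler0 add0r coef_pair_inactive ?oppr0 // (negbTE inact) andbF.
Qed.

End SurrogateKKT.

Theorem theorem2p1 (R : realType) (n p : nat) (x : 'I_n -> 'rV[R]_p)
  (lam1 lam2 tau : R) (hl1 : 0 < lam1) (hl2 : 0 < lam2) (htau : 0 < tau)
  (mu : nat -> 'I_n -> 'rV[R]_p) (th : nat -> 'I_n -> 'I_n -> 'rV[R]_p)
  (Hmu0 : forall i, mu 0%N i = x i)
  (Hth0 : forall i j : 'I_n, (i < j)%N -> th 0%N i j = x i - x j)
  (Hstep : forall m : nat,
     feasible (mu m.+1) (th m.+1) /\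
     (forall mu' th', feasible mu' th' ->
        surrS x lam1 lam2 tau (th m) (mu m.+1) (th m.+1)
        <= surrS x lam1 lam2 tau (th m) mu' th')) :
  exists mstar : nat,
    (forall m : nat, (mstar <= m)%N ->
       objS x lam1 lam2 tau (mu m) (th m) = objS x lam1 lam2 tau (mu mstar) (th mstar))
    /\ KKT_point x lam1 lam2 tau (mu mstar) (th mstar).
Proof.
pose X := (('I_n -> 'rV[R]_p) * ('I_n -> 'I_n -> 'rV[R]_p))%type.
pose key (y : X) :=
  [set ij : 'I_n * 'I_n | (ij.1 < ij.2)%N && (l2norm (y.2 ij.1 ij.2) < tau)].
have key_surrS (y y' z : X) : key y = key y' ->
    surrS x lam1 lam2 tau y.2 z.1 z.2 = surrS x lam1 lam2 tau y'.2 z.1 z.2.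
  move/setP => same_key; apply: surrS_active => i j lt_ij.
  by have := same_key (i, j); rewrite !inE /= lt_ij.
have feas m : feasible (mu m) (th m).
  by case: m => [i j lt_ij | m]; [rewrite Hth0 // !Hmu0 | exact: (Hstep m).1].
have [mstar [obj_const surr_min]] := @mm_stationary _ X _ (fun z => feasible z.1 z.2)
  (fun z => objS x lam1 lam2 tau z.1 z.2) (fun y z => surrS x lam1 lam2 tau y.2 z.1 z.2) key
  (fun y z => objS_le_surrS x lam1 tau y.2 z.1 z.2 (ltW hl2))
  (fun z => surrS_diag x lam1 lam2 tau z.1 z.2) key_surrS (fun m => (mu m, th m)) feas
  (fun m z' => (Hstep m).2 z'.1 z'.2).
exists mstar; split => //.
by apply: kkt_of_surrS_min => // mu' th'; apply: (surr_min (mu', th')).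
Qed.
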